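(* Let $G=(V,E)$ be a task-assistance graph and $\pi=\langle v_0,\dots,v_k\rangle$ ($k\ge1$) a path in $G$, and let $N_{\mathcal{I}}^{\pi}:=\sum_{i=0}^{k}|\mathcal{I}(v_i)|$ be the total number of intervals of the vertices of $\pi$. Then the set of vertex-critical times $C_0$ of $\pi$ can be computed in $O(k+N_{\mathcal{I}}^{\pi})$ time.
   Context: A task-assistance graph is a directed graph $G=(V,E)$ in which every edge $e$ has a length $\ell(e)\ge 0$ and every vertex $v$ has a finite set $\mathcal{I}(v)$ of closed intervals contained in $[0,1]$. A path is $\pi=\langle v_0,\dots,v_k\rangle$ with $(v_i,v_{i+1})\in E$; vertices may repeat, and all quantities below are attached to positions $i$ in the path. Set $\ell(v_{-1},v_0):=0$, $\ell(v_k,v_{k+1}):=0$, $\ell(v_i):=\sum_{j=0}^{i-1}\ell(v_j,v_{j+1})$, $\ell^+(v_i):=\ell(v_i)+\tfrac12\ell(v_i,v_{i+1})$, $\ell^-(v_i):=\ell(v_i)-\tfrac12\ell(v_{i-1},v_i)$, and $\ell^+(v_i,v_j):=\ell^+(v_j)-\ell^+(v_i)$. Augmented interval sets per position: $J_i:=\mathcal{I}(v_i)$ for $0<i<k$, $J_0:=\mathcal{I}(v_0)\cup\{[\ell^+(v_0),\ell^+(v_0)]\}$, $J_k:=\mathcal{I}(v_k)\cup\{[1-\ell^+(v_{k-1},v_k),\,1-\ell^+(v_{k-1},v_k)]\}$. For positions $0\le a<b\le k$ the vertex-pair critical times are $C(a,b):=\{t_e:[t_s,t_e]\in J_a\}\cup\{t_s-(\ell^-(v_b)-\ell^+(v_a)):[t_s,t_e]\in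 J_b\}$, and the vertex-critical times of position $i$ are $C_i:=\bigcup_{0\le a<b\le k}\{\tau+\ell^+(v_a,v_i):\tau\in C(a,b)\}$. *)

From Stdlib Require Import Reals List Arith Lia.
Import ListNotations.
Open Scope R_scope.

(* An interval [t_s,t_e] is the pair (t_s,t_e); the finite set I(v) is a
   duplicate-free list of such pairs. *)
Record tagraph (V : Type) := TAGraph {
  edge : V -> V -> Prop;
  len : V -> V -> R;
  ivs : V -> list (R * R);
  len_nonneg : forall u w, edge u w -> 0 <= len u w;
  ivs_nodup : forall u, NoDup (ivs u);
  ivs_in01 : forall u ts te, In (ts, te) (ivs u) -> 0 <= ts <= te /\ te <= 1
}.
Arguments edge {V} _ _ _.
Arguments len {V} _ _ _.
Arguments ivs {V} _ _.

(* A path <v_0,...,v_k> is given by k and v : nat -> V (only v 0..v k matter). *)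
Definition is_path {V} (G : tagraph V) (k : nat) (v : nat -> V) : Prop :=
  forall i, (i < k)%nat -> edge G (v i) (v (S i)).

Section PathQuantities.
Context {V : Type} (G : tagraph V) (k : nat) (v : nat -> V).

(* l(v_i, v_{i+1}), with l(v_k, v_{k+1}) := 0 *)
Definition lnext (i : nat) : R := if (i <? k)%nat then len G (v i) (v (S i)) else 0.
(* l(v_{i-1}, v_i), with l(v_{-1}, v_0) := 0 *)
Definition lprev (i : nat) : R := match i with O => 0 | S j => len G (v j) (v i) end.
Fixpoint lpos (i : nat) : R := match i with O => 0 | S j => lpos j + lnext j end.
Definition lplus (i : nat) : R := lpos i + lnext i / 2.
Definition lminus (i : nat) : R := lpos i - lprev i / 2.
Definition lplus2 (i j : nat) : R := lplus j - lplus i.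

Definition J (i : nat) : list (R * R) :=
  ivs G (v i)
  ++ (if (i =? 0)%nat then [(lplus 0, lplus 0)] else [])
  ++ (if (i =? k)%nat then [(1 - lplus2 (pred k) k, 1 - lplus2 (pred k) k)] else []).

Definition Cpair (a b : nat) (t : R) : Prop :=
  (exists ts, In (ts, t) (J a)) \/
  (exists ts te, In (ts, te) (J b) /\ t = ts - (lminus b - lplus a)).

Definition Cvert (i : nat) (t : R) : Prop :=
  exists a b tau, (a < b)%nat /\ (b <= k)%nat /\ Cpair a b tau /\ t = tau + lplus2 a i.

Definition NI : nat := fold_right Nat.add 0%nat (map (fun i => length (ivs G (v i))) (seq 0 (S k))).

End PathQuantities.

(** * Cost model: a small first-order functional language over the real RAM
    (unit-cost real arithmetic and comparison), with pairs, lists,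
    let, list case analysis and list fold; every evaluation step costs 1. *)

Inductive val : Type :=
| VR (r : R) | VB (b : bool) | VNil | VCons (h t : val) | VPair (a b : val).

Inductive expr : Type :=
| EVar (n : nat)
| EConst (r : R)
| EAdd (e1 e2 : expr) | ESub (e1 e2 : expr) | EMul (e1 e2 : expr)
| ELe (e1 e2 : expr)
| EIf (c e1 e2 : expr)
| ENil | ECons (e1 e2 : expr)
| EPair (e1 e2 : expr) | EFst (e : expr) | ESnd (e : expr)
| ELet (e1 e2 : expr)                 (* e2 sees the value of e1 as var 0 *)
| ECase (e enil econs : expr)         (* econs sees head as var 0, tail as var 1 *)
| EFold (el einit estep : expr).      (* left fold; estep sees elem as var 0, acc as var 1 *)

Inductive eval : list val -> expr -> val -> nat -> Prop :=
| ev_var env n w : nth_error env n = Some w -> eval env (EVar n) w 1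
| ev_const env r : eval env (EConst r) (VR r) 1
| ev_add env e1 e2 a b c1 c2 : eval env e1 (VR a) c1 -> eval env e2 (VR b) c2 ->
    eval env (EAdd e1 e2) (VR (a + b)) (S (c1 + c2))
| ev_sub env e1 e2 a b c1 c2 : eval env e1 (VR a) c1 -> eval env e2 (VR b) c2 ->
    eval env (ESub e1 e2) (VR (a - b)) (S (c1 + c2))
| ev_mul env e1 e2 a b c1 c2 : eval env e1 (VR a) c1 -> eval env e2 (VR b) c2 ->
    eval env (EMul e1 e2) (VR (a * b)) (S (c1 + c2))
| ev_le env e1 e2 a b c1 c2 : eval env e1 (VR a) c1 -> eval env e2 (VR b) c2 ->
    eval env (ELe e1 e2) (VB (if Rle_dec a b then true else false)) (S (c1 + c2))
| ev_if_t env c e1 e2 w c0 c1 : eval env c (VB true) c0 -> eval env e1 w c1 ->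
    eval env (EIf c e1 e2) w (S (c0 + c1))
| ev_if_f env c e1 e2 w c0 c2 : eval env c (VB false) c0 -> eval env e2 w c2 ->
    eval env (EIf c e1 e2) w (S (c0 + c2))
| ev_nil env : eval env ENil VNil 1
| ev_cons env e1 e2 a b c1 c2 : eval env e1 a c1 -> eval env e2 b c2 ->
    eval env (ECons e1 e2) (VCons a b) (S (c1 + c2))
| ev_pair env e1 e2 a b c1 c2 : eval env e1 a c1 -> eval env e2 b c2 ->
    eval env (EPair e1 e2) (VPair a b) (S (c1 + c2))
| ev_fst env e a b c : eval env e (VPair a b) c -> eval env (EFst e) a (S c)
| ev_snd env e a b c : eval env e (VPair a b) c -> eval env (ESnd e) b (S c)
| ev_let env e1 e2 a w c1 c2 : eval env e1 a c1 -> eval (a :: env) e2 w c2 ->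
    eval env (ELet e1 e2) w (S (c1 + c2))
| ev_case_nil env e en ec w c0 c1 : eval env e VNil c0 -> eval env en w c1 ->
    eval env (ECase e en ec) w (S (c0 + c1))
| ev_case_cons env e en ec h t w c0 c1 : eval env e (VCons h t) c0 ->
    eval (h :: t :: env) ec w c1 -> eval env (ECase e en ec) w (S (c0 + c1))
| ev_fold env el ei es l a w c1 c2 c3 : eval env el l c1 -> eval env ei a c2 ->
    evalfold env es l a w c3 -> eval env (EFold el ei es) w (S (c1 + c2 + c3))
with evalfold : list val -> expr -> val -> val -> val -> nat -> Prop :=
| evf_nil env es a : evalfold env es VNil a a 1
| evf_cons env es h t a a' w c1 c2 : eval (h :: a :: env) es a' c1 ->
    evalfold env es t a' w c2 -> evalfold env es (VCons h t) a w (S (c1 + c2)).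

Fixpoint vlist (l : list val) : val :=
  match l with [] => VNil | x :: r => VCons x (vlist r) end.

Fixpoint reals_of (w : val) : option (list R) :=
  match w with
  | VNil => Some []
  | VCons (VR r) t => match reals_of t with Some l => Some (r :: l) | None => None end
  | _ => None
  end.

(* Input encoding of the path: the list over positions i = 0..k of
   (l(v_{i-1},v_i), list of the intervals (t_s,t_e) of I(v_i)). *)
Definition encode {V} (G : tagraph V) (k : nat) (v : nat -> V) : val :=
  vlist (map (fun i => VPair (VR (lprev G v i))
                             (vlist (map (fun p => VPair (VR (fst p)) (VR (snd p))) (ivs G (v i)))))
             (seq 0 (S k))).

(* In C(a,b) the end times of J_a are shifted by -l+(v_a) and the start times of J_b by
   -l-(v_b); neither shift involves the other vertex, so C_0 is the union, over the
   positions 1 <= i <= k, of the end times of I(v_{i-1}) and the start times of I(v_i),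
   both shifted by l+(v_0) - l-(v_i) (note l-(v_i) = l+(v_{i-1})), together with the two
   points contributed by the augmented intervals of J_0 and J_k.  One left-to-right fold
   over the path, carrying l(v_{i-1}) and I(v_{i-1}), emits these values in constant time
   per interval and per position. *)

From Stdlib Require Import Reals List Arith Lia Lra.
Import ListNotations.
Open Scope R_scope.

Section CriticalTimes.
Context {V : Type} (G : tagraph V) (k : nat) (v : nat -> V).

Lemma lnext_lt i : (i < k)%nat -> lnext G k v i = lprev G v (S i).
Proof. intros lt_ik. unfold lnext. apply Nat.ltb_lt in lt_ik. now rewrite lt_ik. Qed.

Lemma lplus_lminus_S i : (i < k)%nat -> lplus G k v i = lminus G k v (S i).
Proof.
  intros lt_ik. unfold lplus, lminus. cbn [lpos]. rewrite lnext_lt by exact lt_ik. lra.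
Qed.

Lemma lplus_last : lplus G k v k = lpos G k v k.
Proof. unfold lplus, lnext. rewrite Nat.ltb_irrefl. lra. Qed.

Lemma lpos_pred i : (1 <= i <= k)%nat -> lpos G k v i = lpos G k v (pred i) + lprev G v i.
Proof.
  intros Hi. destruct i as [| j]; [lia |]. cbn [pred lpos]. now rewrite lnext_lt by lia.
Qed.

Lemma lminus_pred i :
  (1 <= i <= k)%nat -> lminus G k v i = lpos G k v (pred i) + lprev G v i * (1/2).
Proof. intros Hi. unfold lminus. rewrite lpos_pred by exact Hi. lra. Qed.

Lemma lplus_0 : (1 <= k)%nat -> lplus G k v 0 = lprev G v 1 * (1/2).
Proof. intros Hk. unfold lplus. rewrite lnext_lt by lia. simpl. lra. Qed.

Lemma in_J a p :
  In p (J G k v a) <->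
  In p (ivs G (v a)) \/ (a = 0%nat /\ p = (lplus G k v 0, lplus G k v 0))
  \/ (a = k /\ p = (1 - lplus2 G k v (pred k) k, 1 - lplus2 G k v (pred k) k)).
Proof.
  unfold J. rewrite !in_app_iff.
  destruct (Nat.eqb_spec a 0), (Nat.eqb_spec a k); simpl;
    intuition (subst; auto; congruence).
Qed.

Definition crit_at (i : nat) : list R :=
  map (fun p => snd p + (lplus G k v 0 - lminus G k v i)) (ivs G (v (pred i)))
  ++ map (fun p => fst p + (lplus G k v 0 - lminus G k v i)) (ivs G (v i)).

Definition crit_times : list R :=
  lplus G k v 0 :: (1 - lpos G k v k + lplus G k v 0) :: flat_map crit_at (seq 1 k).

Lemma Cvert0_crit_times t : Cvert G k v 0 t -> In t crit_times.
Proof.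
  intros (a & b & tau & lt_ab & le_bk & Cab & ->).
  unfold crit_times, lplus2. simpl. rewrite in_flat_map.
  destruct Cab as [(ts & Hin) | (ts & te & Hin & ->)]; apply in_J in Hin.
  - destruct Hin as [Hin | [(-> & Hp) | (-> & _)]]; [| | lia].
    + right; right. exists (S a). split; [apply in_seq; lia |].
      apply in_app_iff; left. apply in_map_iff. exists (ts, tau). split; [| exact Hin].
      simpl. rewrite <- lplus_lminus_S by lia. ring.
    + injection Hp as _ ->. left. ring.
  - destruct Hin as [Hin | [(-> & _) | (-> & Hp)]]; [| lia |].
    + right; right. exists b. split; [apply in_seq; lia |].
      apply in_app_iff; right. apply in_map_iff. exists (ts, te).
      split; [simpl; ring | exact Hin].
    + injection Hp as -> _. right; left.
      unfold lplus2.
      rewrite lplus_last, (lplus_lminus_S (pred k)), Nat.succ_pred_pos by lia. ring.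
Qed.

Lemma crit_times_Cvert0 t : (1 <= k)%nat -> In t crit_times -> Cvert G k v 0 t.
Proof.
  intros le1k. unfold crit_times, Cvert, Cpair, lplus2. simpl. rewrite in_flat_map.
  intros [<- | [<- | (i & Hi & Hin)]].
  - exists 0%nat, 1%nat, (lplus G k v 0). do 2 (split; [lia |]). split.
    + left. exists (lplus G k v 0). apply in_J. auto.
    + ring.
  - exists 0%nat, k, (1 - lplus2 G k v (pred k) k - (lminus G k v k - lplus G k v 0)).
    do 2 (split; [lia |]). split.
    + right. do 2 eexists. split; [apply in_J; right; right; split; reflexivity | reflexivity].
    + unfold lplus2.
      rewrite lplus_last, (lplus_lminus_S (pred k)), Nat.succ_pred_pos by lia. ring.
  - apply in_seq in Hi. apply in_app_iff in Hin.
    destruct Hin as [Hin | Hin]; apply in_map_iff in Hin; destruct Hin as ([ts te] & <- & Hin).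
    + exists (pred i), i, te. do 2 (split; [lia |]). split.
      * left. exists ts. apply in_J. auto.
      * simpl. rewrite (lplus_lminus_S (pred i)), Nat.succ_pred_pos by lia. ring.
    + exists 0%nat, i, (ts - (lminus G k v i - lplus G k v 0)). do 2 (split; [lia |]). split.
      * right. exists ts, te. split; [apply in_J; auto | reflexivity].
      * simpl. ring.
Qed.

Lemma Cvert0_iff t : (1 <= k)%nat -> Cvert G k v 0 t <-> In t crit_times.
Proof. intros le1k. split; [apply Cvert0_crit_times | apply crit_times_Cvert0; exact le1k]. Qed.

End CriticalTimes.

Definition vreals (l : list R) : val := vlist (map VR l).

Lemma reals_of_vreals l : reals_of (vreals l) = Some l.
Proof.
  induction l as [| r l IH]; simpl; [reflexivity |]. unfold vreals in IH. now rewrite IH.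
Qed.

Lemma eval_cost_eq env e w c c' : eval env e w c -> c = c' -> eval env e w c'.
Proof. now intros E <-. Qed.

Definition enc_iv (p : R * R) : val := VPair (VR (fst p)) (VR (snd p)).

(* Fold step over a list of intervals: var 0 is the interval, var 1 the list built so far,
   var 2 the shift; [prj] selects the start or the end time. *)
Definition push_shifted (prj : expr -> expr) : expr :=
  ECons (EAdd (prj (EVar 0)) (EVar 2)) (EVar 1).

Lemma push_shifted_fold (prj : expr -> expr) (f : R * R -> R) rest D :
  (forall env e p c, eval env e (enc_iv p) c -> eval env (prj e) (VR (f p)) (S c)) ->
  forall ps out,
  evalfold (VR D :: rest) (push_shifted prj) (vlist (map enc_iv ps)) (vreals out)
    (vreals (rev (map (fun p => f p + D) ps) ++ out)) (7 * length ps + 1).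
Proof.
  intros eval_prj ps. induction ps as [| p ps IH]; intros out; [constructor |].
  replace (7 * length (p :: ps) + 1)%nat with (S (6 + (7 * length ps + 1))) by (simpl; lia).
  cbn [map rev]. rewrite <- app_assoc. cbn [app].
  apply evf_cons with (a' := vreals (f p + D :: out)); [| apply IH].
  unfold push_shifted. change 6%nat with (S (S (S 1 + 1) + 1)).
  apply ev_cons; [apply ev_add |]; [apply eval_prj | |]; now constructor.
Qed.

Definition pos_val (L : R) (cur : list (R * R)) : val :=
  VPair (VR L) (vlist (map enc_iv cur)).

Definition acc_val (Lprev : R) (prev : list (R * R)) (out : list R) : val :=
  VPair (VR Lprev) (VPair (vlist (map enc_iv prev)) (vreals out)).

(* Step of the fold over positions i: var 0 is [pos_val (l(v_{i-1},v_i)) I(v_i)], var 1 the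
   accumulator [acc_val (l(v_{i-1})) I(v_{i-1}) out], var 2 is l+(v_0).  The let-bound
   shift is l+(v_0) - l-(v_i). *)
Definition crit_step : expr :=
  ELet (ESub (EVar 2) (EAdd (EFst (EVar 1)) (EMul (EFst (EVar 0)) (EConst (1/2)))))
    (EPair (EAdd (EFst (EVar 2)) (EFst (EVar 1)))
       (EPair (ESnd (EVar 1))
          (EFold (ESnd (EVar 1))
             (EFold (EFst (ESnd (EVar 2))) (ESnd (ESnd (EVar 2))) (push_shifted ESnd))
             (push_shifted EFst)))).

Lemma crit_step_eval H Lprev L cur prev out rest :
  let D := H - (Lprev + L * (1/2)) in
  eval (pos_val L cur :: acc_val Lprev prev out :: VR H :: rest) crit_step
    (acc_val (Lprev + L) cur
       (rev (map (fun p => fst p + D) cur) ++ rev (map (fun p => snd p + D) prev) ++ out))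
    (31 + 7 * length prev + 7 * length cur).
Proof.
  intros D. eapply eval_cost_eq.
  - eapply ev_let; [repeat econstructor |].
    apply ev_pair; [repeat econstructor |]. apply ev_pair; [repeat econstructor |].
    eapply ev_fold;
      [repeat econstructor | eapply ev_fold; [repeat econstructor | repeat econstructor |] |].
    + apply (push_shifted_fold ESnd snd). intros. now apply ev_snd with (a := VR (fst p)).
    + apply (push_shifted_fold EFst fst). intros. now apply ev_fst with (b := VR (snd p)).
  - lia.
Qed.

Lemma in_rev_app_rev (a b out : list R) t :
  In t (rev a ++ rev b ++ out) <-> In t (b ++ a) \/ In t out.
Proof. rewrite !in_app_iff, <- !in_rev. tauto. Qed.

Section PathFold.
Context {V : Type} (G : tagraph V) (k : nat) (v : nat -> V).

Definition pos_of (i : nat) : val := pos_val (lprev G v i) (ivs G (v i)).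

Definition ivs_count (s n : nat) : nat :=
  fold_right Nat.add 0%nat (map (fun i => length (ivs G (v i))) (seq s n)).

Lemma ivs_count_le_S s n : (ivs_count s n <= ivs_count s (S n))%nat.
Proof.
  revert s. induction n as [| n IH]; intros s; unfold ivs_count in *; simpl; [lia |].
  specialize (IH (S s)). simpl in IH. lia.
Qed.

Lemma crit_fold_eval rest : forall n s out, (1 <= s)%nat -> (s + n <= S k)%nat ->
  exists out' c,
    evalfold (VR (lplus G k v 0) :: rest) crit_step (vlist (map pos_of (seq s n)))
      (acc_val (lpos G k v (pred s)) (ivs G (v (pred s))) out)
      (acc_val (lpos G k v (pred (s + n))) (ivs G (v (pred (s + n)))) out') c
    /\ (c <= 32 * n + 7 * ivs_count (pred s) n + 7 * ivs_count s n + 1)%nat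
    /\ (forall t, In t out' <->
          In t out \/ exists i, (s <= i < s + n)%nat /\ In t (crit_at G k v i)).
Proof.
  induction n as [| n IH]; intros s out Hs Hsn.
  - exists out, 1%nat. rewrite Nat.add_0_r. split; [constructor |]. split; [lia |].
    intros t. split; [tauto |]. intros [? | (i & Hi & _)]; [assumption | lia].
  - pose proof (crit_step_eval (lplus G k v 0) (lpos G k v (pred s)) (lprev G v s)
                  (ivs G (v s)) (ivs G (v (pred s))) out rest) as E1.
    cbv zeta in E1. rewrite <- lminus_pred, <- lpos_pred in E1 by lia.
    set (D := lplus G k v 0 - lminus G k v s) in E1.
    destruct (IH (S s) (rev (map (fun p => fst p + D) (ivs G (v s)))
                        ++ rev (map (fun p => snd p + D) (ivs G (v (pred s)))) ++ out))
      as (out' & c & E2 & Hc & Hout); [lia .. |].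
    exists out', (S (31 + 7 * length (ivs G (v (pred s))) + 7 * length (ivs G (v s)) + c)).
    replace (pred (s + S n)) with (pred (S s + n)) by lia. split; [| split].
    + apply evf_cons with (1 := E1). exact E2.
    + destruct s as [| j]; [lia |].
      unfold ivs_count in *. cbn [pred seq map fold_right] in *. lia.
    + intros t. rewrite Hout, in_rev_app_rev. split.
      * intros [[Hin | Hin] | (i & Hi & Hin)]; [| tauto |]; right.
        -- exists s. split; [lia | exact Hin].
        -- exists i. split; [lia | exact Hin].
      * intros [Hin | (i & Hi & Hin)]; [tauto |].
        destruct (Nat.eq_dec i s) as [-> | Hne]; [tauto |].
        right. exists i. split; [lia | exact Hin].
Qed.

(* On input (l(v_{-1},v_0), I(v_0)) :: (l(v_0,v_1), I(v_1)) :: _ the program binds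
   l+(v_0) = l(v_0,v_1)/2, folds [crit_step] over positions 1..k starting from
   [acc_val 0 I(v_0) []], and prepends the two augmented critical times. *)
Definition crit_prog : expr :=
  ECase (EVar 0) ENil
    (ECase (EVar 1) ENil
       (ELet (EMul (EFst (EVar 0)) (EConst (1/2)))
          (ELet (EFold (EVar 4) (EPair (EConst 0) (EPair (ESnd (EVar 3)) ENil)) crit_step)
             (ECons (EVar 1)
                (ECons (EAdd (ESub (EConst 1) (EFst (EVar 0))) (EVar 1))
                   (ESnd (ESnd (EVar 0)))))))).

Lemma crit_prog_eval : (1 <= k)%nat ->
  exists l c,
    eval [encode G k v] crit_prog (vreals l) c
    /\ (c <= 60 + 32 * k + 14 * NI G k v)%nat
    /\ (forall t, In t l <-> In t (crit_times G k v)).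
Proof.
  intros Hk.
  set (positions := vlist (map pos_of (seq 1 k))).
  assert (Henc : encode G k v = VCons (pos_of 0) positions) by reflexivity.
  assert (Hpos : positions = VCons (pos_of 1) (vlist (map pos_of (seq 2 (pred k))))).
  { unfold positions. destruct k; [lia | reflexivity]. }
  set (rest := [pos_of 1; vlist (map pos_of (seq 2 (pred k))); pos_of 0; positions;
                encode G k v]).
  destruct (crit_fold_eval rest k 1 [] ltac:(lia) ltac:(lia)) as (out & c & E & Hc & Hout).
  rewrite lplus_0 in E by exact Hk. cbn [pred Nat.add] in E.
  exists (lprev G v 1 * (1/2) :: (1 - lpos G k v k + lprev G v 1 * (1/2)) :: out).
  eexists. split; [| split].
  - eapply ev_case_cons; [constructor; now rewrite Henc |].
    eapply ev_case_cons; [constructor; simpl; now rewrite Hpos |].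
    eapply ev_let; [repeat econstructor |].
    eapply ev_let; [eapply ev_fold; [now constructor | repeat econstructor | exact E] |].
    repeat econstructor.
  - pose proof (ivs_count_le_S 0 k) as Hcount.
    change (NI G k v) with (ivs_count 0 (S k)).
    unfold ivs_count in *. cbn [pred seq map fold_right] in *. lia.
  - intros t. unfold crit_times. rewrite lplus_0 by exact Hk. cbn [In].
    rewrite Hout, in_flat_map.
    setoid_rewrite in_seq. simpl. tauto.
Qed.

End PathFold.

Theorem lemma1 :
  exists (P : expr) (c : nat),
    forall (V : Type) (G : tagraph V) (k : nat) (v : nat -> V),
      (1 <= k)%nat -> is_path G k v ->
      exists (out : val) (cost : nat) (l : list R),
        eval [encode G k v] P out cost /\
        reals_of out = Some l /\
        (forall t, In t l <-> Cvert G k v 0 t) /\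
        (cost <= c * (k + NI G k v))%nat.
Proof.
  exists crit_prog, 100%nat. intros V G k v Hk _.
  destruct (crit_prog_eval G k v Hk) as (l & cost & E & Hcost & Hl).
  exists (vreals l), cost, l. split; [exact E |]. split; [apply reals_of_vreals |]. split.
  - intros t. rewrite Hl, Cvert0_iff by exact Hk. reflexivity.
  - lia.
Qed.
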